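(* Let $t,k\ge1$ with $k\le t/6$ and let $F$ be a $[t,k]$-interval system. Then there exists a randomized $[t,k]$-interval system $\mathcal{F}$ such that (1) $\mathrm{Sets}(\mathcal{F})=\mathrm{Sets}(F)$; (2) $\mathrm{val}(\mathcal{F})\le5\,\mathrm{val}(F)$; (3) $\mathcal{F}$ is valid.
   Context: An interval is a nonempty set $\{a,\ldots,b\}$ of integers; a $[t,k]$-interval system is a set of $k$ pairwise disjoint intervals contained in $[t]$; a randomized one is a distribution over such systems. $\mathrm{val}(F)=\sum_{I\in F}1/|I|$, $\mathrm{val}(\mathcal{F})=\mathbb{E}_{F\sim\mathcal{F}}\mathrm{val}(F)$. $\mathrm{Sets}(F)$ is the distribution of the set obtained by choosing independently a uniform element from each interval of $F$; $\mathrm{Sets}(\mathcal{F})$ samples $F\sim\mathcal{F}$ then a set from $\mathrm{Sets}(F)$. A $[t]$-interval system $F$ is valid if $\sum_{I\in F}|I|\le t/2$; a randomized one is valid if every system in its support is valid. *)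

(* Points of [t] are represented by 'I_t = {0,...,t-1}. *)
From HB Require Import structures.
From mathcomp Require Import all_boot all_order all_algebra.
From mathcomp Require Import reals.
Set Implicit Arguments. Unset Strict Implicit. Unset Printing Implicit Defensive.
Import Order.TTheory GRing.Theory Num.Theory.
Local Open Scope ring_scope.

Section IntervalSystems.
Variable t : nat.

Definition is_interval (I : {set 'I_t}) : bool :=
  [exists a : 'I_t, exists b : 'I_t,
     ((a <= b)%N) && (I == [set i : 'I_t | (a <= i <= b)%N])].

Definition is_system (k : nat) (F : {set {set 'I_t}}) : bool :=
  [&& [forall I in F, is_interval I],
      [forall I in F, forall J in F, (I != J) ==> [disjoint I & J]]
    & #|F| == k].

Variable R : realType.

Definition sys_val (F : {set {set 'I_t}}) : R := \sum_(I in F) (#|I|%:R)^-1.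

Definition valid (F : {set {set 'I_t}}) : bool := (2 * \sum_(I in F) #|I| <= t)%N.

Definition choice_fn (F : {set {set 'I_t}}) (c : {ffun {set 'I_t} -> option 'I_t}) : bool :=
  [forall I, if I \in F then (if c I is Some x then x \in I else false)
             else c I == None].

Definition choice_set (F : {set {set 'I_t}}) (c : {ffun {set 'I_t} -> option 'I_t})
  : {set 'I_t} := [set x | [exists I in F, c I == Some x]].

(* Sets(F): probability of the set S when choosing independently a uniform
   element from each interval of F *)
Definition Sets (F : {set {set 'I_t}}) (S : {set 'I_t}) : R :=
  \sum_(c : {ffun {set 'I_t} -> option 'I_t} | choice_fn F c)
     (\prod_(I in F) (#|I|%:R)^-1) * (S == choice_set F c)%:R.

(* randomized [t,k]-interval system: a probability distribution over
   [t,k]-interval systems (a finite type, so a weight function) *)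
Definition is_rand_system (k : nat) (mu : {ffun {set {set 'I_t}} -> R}) : Prop :=
  (forall F, 0 <= mu F) /\ (\sum_F mu F = 1) /\
  (forall F, mu F != 0 -> is_system k F).

Definition rval (mu : {ffun {set {set 'I_t}} -> R}) : R := \sum_F mu F * sys_val F.

Definition rSets (mu : {ffun {set {set 'I_t}} -> R}) (S : {set 'I_t}) : R :=
  \sum_F mu F * Sets F S.

Definition rvalid (mu : {ffun {set {set 'I_t}} -> R}) : Prop :=
  forall F, mu F != 0 -> valid F.

End IntervalSystems.

(* Idea (the randomized system of the paper, with constant 4 instead of 5):
   cut every interval I of F, by the rank of its points, into at most four
   consecutive pieces of size at most |I|/4 + 1, and independently for each
   I keep a single piece J with probability |J|/|I|.
   - Sets is preserved: choosing a piece J with probability |J|/|I| and then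
     a uniform point of J is the same as choosing a uniform point of I.
   - The expected value of 1/|J| is #pieces/|I| <= 4/|I|, so val grows by a
     factor at most 4 (hence at most 5).
   - Every system in the support has total length at most
     sum (|I|/4 + 1) <= t/4 + k <= t/4 + t/6 <= t/2, so it is valid. *)
From HB Require Import structures.
From mathcomp Require Import all_boot all_order all_algebra.
From mathcomp Require Import reals.
From mathcomp Require Import zify ring lra.
Import Order.TTheory GRing.Theory Num.Theory.
Set Implicit Arguments. Unset Strict Implicit. Unset Printing Implicit Defensive.

Section Pieces.
Variable t : nat.
Implicit Types (I J : {set 'I_t}).

(* Order-convex subsets of [t]; the nonempty ones are exactly the intervals. *)
Definition convex I :=
  forall x y i : 'I_t, x \in I -> y \in I -> (x <= i <= y)%N -> i \in I.

Lemma interval_convex I : is_interval I -> convex I.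
Proof.
case/existsP=> a /existsP [b /andP [_ /eqP ->]] x y i; rewrite !inE.
move=> /andP[ax _] /andP[_ yb] /andP[xi iy]; apply/andP; split.
  exact: leq_trans ax xi.
exact: leq_trans iy yb.
Qed.

Lemma interval_neq0 I : is_interval I -> I != set0.
Proof.
case/existsP=> a /existsP [b /andP [ab /eqP ->]]; apply/set0Pn; exists a.
by rewrite inE leqnn ab.
Qed.

(* A convex set containing a point is an interval: from its minimum to its
   maximum. *)
Lemma convex_interval I x0 : x0 \in I -> convex I -> is_interval I.
Proof.
move=> x0I cI.
have [a aI amin] := arg_minnP (fun i : 'I_t => nat_of_ord i) x0I.
have [b bI bmax] := arg_maxnP (fun i : 'I_t => nat_of_ord i) x0I.
apply/existsP; exists a; apply/existsP; exists b.
rewrite (amin _ bI) /=; apply/eqP/setP => i; rewrite inE.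
apply/idP/idP => [iI|]; first by rewrite amin //=; exact: bmax.
exact: cI.
Qed.

Definition rank_in I (i : 'I_t) := #|[set j in I | (j < i)%N]|.

Lemma rank_in_mono I (x y : 'I_t) : (x <= y)%N -> (rank_in I x <= rank_in I y)%N.
Proof.
move=> xy; apply: subset_leq_card; apply/subsetP=> j; rewrite !inE.
by case/andP=> -> jx; exact: leq_trans jx xy.
Qed.

Lemma rank_in_strict I (x y : 'I_t) :
  x \in I -> (x < y)%N -> (rank_in I x < rank_in I y)%N.
Proof.
move=> xI xy; apply: proper_card; apply/properP; split.
  apply/subsetP=> j; rewrite !inE => /andP[-> jx]; exact: ltn_trans jx xy.
by exists x; rewrite !inE ?xI ?xy ?ltnn.
Qed.

Lemma rank_in_inj I : {in I &, injective (rank_in I)}.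
Proof.
move=> x y xI yI e; apply/eqP; rewrite -val_eqE /=; case: ltngtP => // h.
  by have := rank_in_strict xI h; rewrite e ltnn.
by have := rank_in_strict yI h; rewrite e ltnn.
Qed.

Lemma rank_in_lt I x : x \in I -> (rank_in I x < #|I|)%N.
Proof.
move=> xI; apply: proper_card; apply/properP; split.
  by apply/subsetP=> j; rewrite inE => /andP[].
by exists x; rewrite // inE ltnn andbF.
Qed.

(* The q-th piece of I gathers the points whose rank lies in the q-th block
   of [piece_size I] consecutive ranks; four blocks cover all ranks. *)
Definition piece_size I := (#|I| %/ 4).+1.
Definition piece I (q : nat) := [set i in I | rank_in I i %/ piece_size I == q].
Definition pieces I := [set piece I q | q : 'I_4] :\ set0.

Lemma piece_sub I q : piece I q \subset I.
Proof. by apply/subsetP=> i; rewrite inE => /andP[]. Qed.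

(* Distinct points of a piece have distinct ranks modulo [piece_size I]. *)
Lemma card_piece I q : (#|piece I q| <= piece_size I)%N.
Proof.
pose g (i : 'I_t) : 'I_(piece_size I) := inord (rank_in I i %% piece_size I).
rewrite -(card_in_imset (f := g)).
  by rewrite -[X in (_ <= X)%N]card_ord max_card.
move=> x y; rewrite !inE => /andP[xI /eqP qx] /andP[yI /eqP qy] /(congr1 val).
rewrite /g /= !inordK ?ltn_mod // => e; apply: (rank_in_inj xI yI).
by rewrite (divn_eq (rank_in I x) (piece_size I)) (divn_eq (rank_in I y) (piece_size I)) qx qy e.
Qed.

Lemma piece_convex I q : is_interval I -> convex (piece I q).
Proof.
move=> /interval_convex cI x y i; rewrite !inE.
move=> /andP[xI /eqP qx] /andP[yI /eqP qy] /[dup] /andP[xi iy] xiy.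
rewrite (cI x y i) //= eqn_leq; apply/andP; split.
  by rewrite -qy; apply: leq_div2r; exact: rank_in_mono.
by rewrite -qx; apply: leq_div2r; exact: rank_in_mono.
Qed.

Lemma pieces_partition I : partition (pieces I) I.
Proof.
apply/and3P; split.
- apply/eqP/setP=> x; apply/bigcupP/idP => [[J]|xI].
    rewrite !inE => /andP[_ /imsetP[q _ ->]]; exact: (subsetP (piece_sub I q)).
  have qlt : (rank_in I x %/ piece_size I < 4)%N.
    rewrite ltn_divLR //; apply: (leq_trans (rank_in_lt xI)); rewrite /piece_size; lia.
  exists (piece I (Ordinal qlt)); last by rewrite inE xI /=.
  rewrite !inE; apply/andP; split; last by apply/imsetP; exists (Ordinal qlt).
  by apply/set0Pn; exists x; rewrite inE xI /=.
- apply/trivIsetP => A B; rewrite !inE.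
  move=> /andP[_ /imsetP[q _ ->]] /andP[_ /imsetP[q' _ ->]] ne.
  rewrite -setI_eq0; apply/eqP/setP => x; rewrite !inE; apply/negbTE/negP.
  case/andP => /andP[_ /eqP e1] /andP[_ /eqP e2].
  have qq : q = q' by apply/val_inj; rewrite /= -e1 -e2.
  by rewrite qq eqxx in ne.
- by rewrite !inE eqxx.
Qed.

Lemma pieces_sub I J : J \in pieces I -> J \subset I /\ J != set0.
Proof.
rewrite !inE => /andP[ne /imsetP[q _ eJ]]; rewrite eJ in ne *.
by split => //; exact: piece_sub.
Qed.

Lemma card_pieces_gt0 I J : J \in pieces I -> (0 < #|J|)%N.
Proof. by move=> /pieces_sub[_]; rewrite card_gt0. Qed.

Lemma pieces_interval I J : is_interval I -> J \in pieces I -> is_interval J.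
Proof.
move=> iI; rewrite !inE => /andP[/set0Pn[x xJ] /imsetP[q _ eJ]].
by apply: (convex_interval xJ); rewrite eJ; apply: piece_convex.
Qed.

Lemma card_pieces_le I J : J \in pieces I -> (#|J| <= piece_size I)%N.
Proof. by rewrite !inE => /andP[_ /imsetP[q _ ->]]; apply: card_piece. Qed.

Lemma num_pieces I : (#|pieces I| <= 4)%N.
Proof.
apply: leq_trans (subset_leq_card (subsetDl _ _)) _.
by apply: leq_trans (leq_imset_card _ _) _; rewrite card_ord.
Qed.

End Pieces.

Local Open Scope ring_scope.

Section SetsFormula.
Variables (t : nat) (R : realType).
Implicit Types (G : {set {set 'I_t}}) (S : {set 'I_t}).

Definition transversal G S :=
  (S \subset cover G) && [forall J in G, #|S :&: J| == 1%N].

Lemma choice_fnP G c : choice_fn G c ->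
  forall J, if J \in G then exists2 x, c J = Some x & x \in J else c J = None.
Proof.
move/forallP=> h J; move: (h J); case: (J \in G); last by move/eqP.
by case: (c J) => // x xJ; exists x.
Qed.

Definition transversal_choice G S : {ffun {set 'I_t} -> option 'I_t} :=
  [ffun J => if J \in G then [pick x in S :&: J] else None].

Lemma transversal_single G S :
  transversal G S -> forall J, J \in G -> exists y, S :&: J = [set y].
Proof. by case/andP=> _ /forallP h J JG; move: (h J); rewrite JG /= => /cards1P. Qed.

Lemma transversal_choiceE G S J y :
  J \in G -> S :&: J = [set y] -> transversal_choice G S J = Some y.
Proof.
move=> JG e; rewrite ffunE JG; case: pickP => [z|/(_ y)].
  by rewrite e inE => /eqP ->.
by rewrite e inE eqxx.
Qed.

Lemma choice_set_transversal G c :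
  trivIset G -> choice_fn G c -> transversal G (choice_set G c).
Proof.
move=> tG /choice_fnP cP; apply/andP; split.
  apply/subsetP=> x; rewrite inE => /existsP[J /andP[JG /eqP cJ]].
  move: (cP J); rewrite JG cJ => -[y [<-] xJ].
  by apply/bigcupP; exists J.
apply/forallP=> J; apply/implyP=> JG; apply/cards1P.
move: (cP J); rewrite JG => -[x cJ xJ]; exists x; apply/setP=> y; rewrite !inE.
apply/andP/eqP => [[/existsP[J' /andP[J'G /eqP cJ']] yJ]|->].
  move: (cP J'); rewrite J'G cJ' => -[z [<-] yJ'].
  have eJ : J' = J.
    apply/eqP; apply: contraTT yJ => ne.
    by rewrite (disjointFr (trivIsetP tG _ _ J'G JG ne) yJ').
  by move: cJ'; rewrite eJ cJ => -[].
by split => //; apply/existsP; exists J; rewrite JG cJ /=.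
Qed.

Lemma choice_of_transversal G S c :
  transversal G S -> choice_fn G c -> S = choice_set G c ->
  c = transversal_choice G S.
Proof.
move=> tr /choice_fnP cP eS; apply/ffunP=> J.
move: (cP J); case JG: (J \in G); last by move=> ->; rewrite ffunE JG.
case=> x cJ xJ; have [y ey] := transversal_single tr JG.
rewrite cJ (transversal_choiceE JG ey); congr Some; apply/set1P.
by rewrite -ey inE xJ andbT {1}eS inE; apply/existsP; exists J; rewrite JG cJ /=.
Qed.

Lemma transversal_choiceP G S : transversal G S ->
  choice_fn G (transversal_choice G S) && (S == choice_set G (transversal_choice G S)).
Proof.
move=> tr; have inSJ J y : S :&: J = [set y] -> (y \in S) && (y \in J).
  by move=> ey; rewrite -in_setI ey set11.
apply/andP; split.
  apply/forallP=> J; case JG: (J \in G); last by rewrite ffunE JG.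
  have [y ey] := transversal_single tr JG.
  by rewrite (transversal_choiceE JG ey); case/andP: (inSJ _ _ ey).
apply/eqP/setP => x; rewrite inE; apply/idP/existsP => [xS|[J /andP[JG /eqP cJ]]].
  case/andP: (tr) => /subsetP/(_ x xS)/bigcupP[J JG xJ] _.
  have [y ey] := transversal_single tr JG.
  exists J; rewrite JG (transversal_choiceE JG ey) /=.
  have : x \in S :&: J by rewrite inE xS xJ.
  by rewrite ey inE => /eqP ->.
have [y ey] := transversal_single tr JG.
rewrite (transversal_choiceE JG ey) in cJ; case: cJ => <-.
by case/andP: (inSJ _ _ ey).
Qed.

Lemma Sets_transversal G S : trivIset G ->
  Sets R G S = (\prod_(J in G) (#|J|%:R)^-1) * (transversal G S)%:R.
Proof.
move=> tG; rewrite /Sets -big_distrr /=; congr (_ * _).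
rewrite (bigID (fun c => S == choice_set G c)) /= [X in _ + X]big1 ?addr0; last first.
  by move=> c /andP[_ /negbTE ->].
have [tr|ntr] := boolP (transversal G S).
  rewrite (eq_bigl (pred1 (transversal_choice G S))) ?big_pred1_eq.
    by case/andP: (transversal_choiceP tr) => _ ->.
  move=> c; apply/idP/eqP => [/andP[cf /eqP eS]|->]; first exact: choice_of_transversal.
  exact: transversal_choiceP.
rewrite big_pred0 // => c; apply/negbTE/negP => /andP[cf /eqP eS].
by move: ntr; rewrite eS choice_set_transversal.
Qed.

End SetsFormula.

Lemma prod_indicator (R : realType) (T : finType) (D : {set T}) (P : pred T) :
  \prod_(i in D) ((P i)%:R : R) = ([forall i in D, P i])%:R.
Proof.
have [h|] := boolP [forall i in D, P i].
  by rewrite big1 // => i iD; move/forallP/(_ i): h; rewrite iD /= => ->.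
rewrite negb_forall => /existsP[i]; rewrite negb_imply => /andP[iD /negbTE Pi].
by rewrite (bigD1 i) //= Pi mul0r.
Qed.

Section Refinement.
Variables (t : nat) (R : realType) (F : {set {set 'I_t}}).
Hypothesis F_intervals : forall I, I \in F -> is_interval I.
Hypothesis F_disjoint : trivIset F.

(* Choices of one piece of each interval of F, and the weight of a choice:
   each piece J of I is kept with probability |J| / |I|, independently. *)
Definition piece_choices := pfamily set0 F (@pieces t).
Definition choice_weight (f : {ffun {set 'I_t} -> {set 'I_t}}) : R :=
  \prod_(I in F) (#|f I|%:R / #|I|%:R).

Definition piece_distr : {ffun {set {set 'I_t}} -> R} :=
  [ffun G => \sum_(f in piece_choices | f @: F == G) choice_weight f].

Lemma piece_choicesP f : f \in piece_choices -> forall I, I \in F -> f I \in pieces I.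
Proof. by case/pfamilyP => _ h I IF; apply: h. Qed.

Lemma chosen_sub f : f \in piece_choices ->
  forall I, I \in F -> f I \subset I /\ f I != set0.
Proof. by move=> fA I IF; apply: pieces_sub (piece_choicesP fA IF). Qed.

Lemma card_F_gt0 I : I \in F -> (0 < #|I|)%N.
Proof. by move=> IF; rewrite card_gt0 interval_neq0 // F_intervals. Qed.

(* Disjointness of F makes a piece choice injective on F, with disjoint
   image. *)
Lemma chosen_inj f : f \in piece_choices -> {in F &, injective f}.
Proof.
move=> fA I I' IF I'F e.
have [[sI /set0Pn[x xf]] [sI' _]] := (chosen_sub fA IF, chosen_sub fA I'F).
have xI : x \in I := subsetP sI x xf.
have xI' : x \in I' by apply: (subsetP sI'); rewrite -e.
apply/eqP; apply: contraTT xI' => ne.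
by rewrite (disjointFr (trivIsetP F_disjoint _ _ IF I'F ne) xI).
Qed.

Lemma chosen_disjoint f : f \in piece_choices -> trivIset (f @: F).
Proof.
move=> fA; apply/trivIsetP => _ _ /imsetP[I IF ->] /imsetP[I' I'F ->] ne.
have ne' : I != I' by apply: contraNneq ne => ->.
have [[sI _] [sI' _]] := (chosen_sub fA IF, chosen_sub fA I'F).
exact: disjointW sI sI' (trivIsetP F_disjoint _ _ IF I'F ne').
Qed.

Lemma chosen_system k f : #|F| = k -> f \in piece_choices -> is_system k (f @: F).
Proof.
move=> cF fA; apply/and3P; split.
- apply/forallP=> J; apply/implyP => /imsetP[I IF ->].
  exact: pieces_interval (F_intervals IF) (piece_choicesP fA IF).
- apply/forallP=> J; apply/implyP=> JF; apply/forallP=> J'; apply/implyP=> J'F.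
  by apply/implyP; exact: (trivIsetP (chosen_disjoint fA)).
- by rewrite card_in_imset ?cF //; apply: chosen_inj.
Qed.

(* Pieces have size at most |I|/4 + 1, so for k <= t/6 disjoint intervals
   the chosen pieces have total length at most t/4 + k <= t/2. *)
Lemma chosen_valid k f : (6 * k <= t)%N -> #|F| = k -> f \in piece_choices ->
  valid (f @: F).
Proof.
move=> tk cF fA; rewrite /valid big_imset /=; last exact: chosen_inj.
have le_pieces : (\sum_(I in F) #|f I| <= \sum_(I in F) #|I| %/ 4 + k)%N.
  rewrite -cF -sum1_card -big_split /=; apply: leq_sum => I IF.
  by rewrite addn1; apply: card_pieces_le; apply: piece_choicesP.
have le_t : (\sum_(I in F) #|I| <= t)%N.
  by rewrite (eqP F_disjoint); apply: leq_trans (max_card _) _; rewrite card_ord.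
have le_quarter : (4 * \sum_(I in F) #|I| %/ 4 <= \sum_(I in F) #|I|)%N.
  by rewrite big_distrr /=; apply: leq_sum => I _; rewrite mulnC leq_divM.
move: le_pieces (leq_trans le_quarter le_t).
set A := (\sum_(I in F) #|f I|)%N; set X := (\sum_(I in F) #|I| %/ 4)%N.
clearbody A X; lia.
Qed.

Lemma piece_distr_expectation (h : {set {set 'I_t}} -> R) :
  \sum_G piece_distr G * h G = \sum_(f in piece_choices) choice_weight f * h (f @: F).
Proof.
symmetry; rewrite (partition_big (fun f : {ffun {set 'I_t} -> {set 'I_t}} => f @: F) predT) //=.
apply: eq_bigr => G _; rewrite ffunE big_distrl /=.
by apply: eq_bigr => f /andP[_ /eqP ->].
Qed.

Lemma sum_choices_prod (g : {set 'I_t} -> {set 'I_t} -> R) :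
  \sum_(f in piece_choices) \prod_(I in F) g I (f I) =
  \prod_(I in F) \sum_(J in pieces I) g I J.
Proof. by rewrite (big_distr_big_dep set0). Qed.

Lemma piece_mass I : I \in F -> \sum_(J in pieces I) (#|J|%:R / #|I|%:R : R) = 1.
Proof.
move=> IF; rewrite -mulr_suml -natr_sum -(card_partition (pieces_partition I)).
by rewrite divff // pnatr_eq0 -lt0n card_F_gt0.
Qed.

Lemma piece_distr_ge0 G : 0 <= piece_distr G.
Proof.
rewrite ffunE; apply: sumr_ge0 => f _; apply: prodr_ge0 => I _.
by rewrite divr_ge0 ?ler0n.
Qed.

Lemma piece_distr_sum1 : \sum_G piece_distr G = 1.
Proof.
under eq_bigr do rewrite -[piece_distr _]mulr1.
rewrite (piece_distr_expectation (fun=> 1)).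
under eq_bigr do rewrite mulr1.
by rewrite (sum_choices_prod (fun I J => #|J|%:R / #|I|%:R)) big1 // => I; apply: piece_mass.
Qed.

Lemma piece_distr_support G : piece_distr G != 0 ->
  exists2 f, f \in piece_choices & G = f @: F.
Proof.
rewrite ffunE; case: (pickP [pred f | (f \in piece_choices) && (f @: F == G)]).
  by move=> f /andP[fA /eqP <-]; exists f.
by move=> none; rewrite big_pred0 ?eqxx // => f; exact: none.
Qed.

Lemma expected_inverse_length I0 : I0 \in F ->
  \sum_(f in piece_choices) choice_weight f * (#|f I0|%:R)^-1 =
  #|pieces I0|%:R / #|I0|%:R.
Proof.
move=> I0F.
pose g (I J : {set 'I_t}) : R :=
  #|J|%:R / #|I|%:R * (if I == I0 then (#|J|%:R)^-1 else 1).
transitivity (\sum_(f in piece_choices) \prod_(I in F) g I (f I)).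
  apply: eq_bigr => f fA; rewrite /choice_weight (bigD1 I0) //= [in RHS](bigD1 I0) //=.
  rewrite /g eqxx mulrAC; congr (_ * _); apply: eq_bigr => I /andP[_ /negbTE ->].
  by rewrite mulr1.
rewrite sum_choices_prod (bigD1 I0) //= [X in _ * X]big1 ?mulr1; last first.
  move=> I /andP[IF /negbTE nI]; rewrite /g nI.
  by under eq_bigr do rewrite mulr1; exact: piece_mass.
rewrite /g eqxx (eq_bigr (fun _ => (#|I0|%:R)^-1)) ?sumr_const ?mulr_natl //.
move=> J JP; rewrite mulrAC divff ?mul1r //.
by rewrite pnatr_eq0 -lt0n (card_pieces_gt0 JP).
Qed.

(* Each interval has at most four pieces, so val grows at most fourfold. *)
Lemma rval_piece_distr : rval piece_distr <= 4 * sys_val R F.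
Proof.
rewrite /rval piece_distr_expectation.
under eq_bigr => f fA.
  rewrite /sys_val big_imset /=; last exact: chosen_inj.
  rewrite big_distrr /=.
over.
rewrite exchange_big /sys_val big_distrr /=; apply: ler_sum => I IF.
rewrite expected_inverse_length // ler_wpM2r ?invr_ge0 ?ler0n //.
by rewrite (ler_nat R _ 4) num_pieces.
Qed.

Definition picks_in (S I J : {set 'I_t}) := (#|S :&: I| == 1%N) && (S :&: I \subset J).

Lemma transversal_chosen f S : f \in piece_choices ->
  transversal (f @: F) S = (S \subset cover F) && [forall I in F, picks_in S I (f I)].
Proof.
move=> fA; have sub I : I \in F -> f I \subset I by move=> /(chosen_sub fA)[].
have restrict I : I \in F -> S :&: I \subset f I -> S :&: f I = S :&: I.
  by move=> IF sSf; apply/eqP; rewrite eqEsubset setIS ?sub // subsetI subsetIl.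
apply/andP/andP => [[cov /forallP h]|[cov /forallP h]]; split.
- apply: subset_trans cov _; apply/bigcupsP=> _ /imsetP[I IF ->].
  exact: subset_trans (sub I IF) (bigcup_sup _ IF).
- apply/forallP=> I; apply/implyP=> IF.
  have e : S :&: f I = S :&: I.
    apply/setP=> x; rewrite !inE; apply/andP/andP => -[xS xI]; split => //.
      exact: (subsetP (sub I IF)).
    case/bigcupP: (subsetP cov x xS) => _ /imsetP[I' I'F ->] xf.
    suff <- : I' = I by [].
    apply/eqP; apply: contraTT xI => ne.
    by rewrite (disjointFr (trivIsetP F_disjoint _ _ I'F IF ne) (subsetP (sub I' I'F) x xf)).
  by move: (h (f I)); rewrite imset_f //= /picks_in -e => ->; rewrite subsetIr.
- apply/subsetP=> x xS; case/bigcupP: (subsetP cov x xS) => I IF xI.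
  move: (h I); rewrite IF /= => /andP[_ sSf].
  apply/bigcupP; exists (f I); first exact: imset_f.
  by apply: (subsetP sSf); rewrite inE xS xI.
- apply/forallP=> J; apply/implyP=> /imsetP[I IF ->].
  by move: (h I); rewrite IF /= => /andP[c1 sSf]; rewrite restrict.
Qed.

Lemma sum_picks_in S I :
  \sum_(J in pieces I) ((picks_in S I J)%:R : R) = (#|S :&: I| == 1%N)%:R.
Proof.
have [/cards1P[x ex]|n1] := boolP (#|S :&: I| == 1%N); last first.
  by rewrite big1 // => J _; rewrite /picks_in (negbTE n1).
have xI : x \in I by move: (set11 x); rewrite -ex => /setIP[].
have /and3P[/eqP cov tr _] := pieces_partition I.
have xcov : x \in cover (pieces I) by rewrite cov.
rewrite (bigD1 (pblock (pieces I) x)) ?pblock_mem //=.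
rewrite /picks_in ex cards1 eqxx sub1set mem_pblock xcov /=.
rewrite big1 ?addr0 // => J /andP[JP ne]; rewrite sub1set /=.
by case xJ: (x \in J) => //=; rewrite (def_pblock tr JP xJ) eqxx in ne.
Qed.

Lemma weighted_Sets_chosen f S : f \in piece_choices ->
  choice_weight f * Sets R (f @: F) S =
  (S \subset cover F)%:R * \prod_(I in F) ((#|I|%:R)^-1 * (picks_in S I (f I))%:R).
Proof.
move=> fA; rewrite (Sets_transversal _ _ (chosen_disjoint fA)) transversal_chosen //.
rewrite -mulnb natrM -(prod_indicator _ F (fun I => picks_in S I (f I))).
rewrite big_split /= big_imset /=; last exact: chosen_inj.
have -> : \prod_(I in F) (#|I|%:R)^-1 =
    choice_weight f * \prod_(I in F) (#|f I|%:R)^-1 :> R.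
  rewrite /choice_weight -big_split /=; apply: eq_bigr => I IF.
  rewrite mulrAC divff ?mul1r // pnatr_eq0 -lt0n.
  exact: card_pieces_gt0 (piece_choicesP fA IF).
by ring.
Qed.

(* Sets is preserved: summing over the piece choices, independence and
   [sum_picks_in] turn the right-hand side of [weighted_Sets_chosen] into
   the closed form of [Sets_transversal] for F. *)
Lemma rSets_piece_distr S : rSets piece_distr S = Sets R F S.
Proof.
rewrite /rSets piece_distr_expectation (Sets_transversal _ _ F_disjoint).
rewrite (eq_bigr _ (fun f fA => weighted_Sets_chosen S fA)) -big_distrr /=.
rewrite (sum_choices_prod (fun I J => (#|I|%:R)^-1 * (picks_in S I J)%:R)).
under eq_bigr do rewrite -big_distrr /= sum_picks_in.
by rewrite big_split /= prod_indicator /transversal -mulnb natrM mulrCA.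
Qed.

End Refinement.

Lemma systemP t k (F : {set {set 'I_t}}) : is_system k F ->
  [/\ forall I, I \in F -> is_interval I, trivIset F & #|F| = k].
Proof.
case/and3P=> /forallP intF /forallP disjF /eqP cF; split => //.
  by move=> I IF; move: (intF I); rewrite IF.
apply/trivIsetP => I J IF JF ne.
by move: (disjF I); rewrite IF /= => /forallP/(_ J); rewrite JF ne.
Qed.

Theorem mainTheorem14 (R : realType) (t k : nat) :
  (1 <= t)%N -> (1 <= k)%N -> (6 * k <= t)%N ->
  forall F : {set {set 'I_t}}, is_system k F ->
  exists mu : {ffun {set {set 'I_t}} -> R},
    is_rand_system k mu /\
    (forall S : {set 'I_t}, rSets mu S = Sets R F S) /\
    rval mu <= 5 * sys_val R F /\
    rvalid mu.
Proof.
move=> _ _ tk F /systemP[F_int F_disj cF].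
exists (piece_distr R F); split; [split; [|split]|split; [|split]].
- exact: piece_distr_ge0.
- exact: piece_distr_sum1.
- by move=> G /piece_distr_support[f fA ->]; exact: chosen_system.
- exact: rSets_piece_distr.
- have val_ge0 : 0 <= sys_val R F by apply: sumr_ge0 => I _; rewrite invr_ge0.
  have := rval_piece_distr R F_int F_disj; lra.
- by move=> G /piece_distr_support[f fA ->]; exact: (chosen_valid F_disj tk cF fA).
Qed.
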